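(* Let $k\ge1$ be the cache size and let $N\ge k+1$. For the path access graph $P_N$ on $N$ vertices and $\mathcal{A}\in\{\mathrm{LRU},\mathrm{FAR}\}$, \[ \mathcal{I}^{P_N}[\mathrm{FWF},\mathcal{A}]=\left[0,\ 1-\frac{1}{k}\right]. \] Moreover, for $\mathcal{A}=\mathrm{LRU}$ the same equality $\mathcal{I}^{G}[\mathrm{FWF},\mathrm{LRU}]=[0,1-\frac1k]$ holds for any access graph $G$ containing a path on $k+1$ vertices.
   Context: Paging: a cache holds at most $k$ pages and is initially empty. A request to a page in the cache is a hit; otherwise it is a fault, the page is brought into the cache, evicting a page first if the cache is full. $\mathcal{A}(I)$ is the number of faults of $\mathcal{A}$ on request sequence $I$. LRU evicts the least recently requested cached page. FWF (flush-when-full): on a fault with a full cache, it empties the cache and then brings in the requested page. FAR (relative to the access graph): each requested page is marked; on a fault with a full cache, if all cached pages are marked it first unmarks all pages; it then evicts the unmarked cached page whose graph distance to the nearest marked page is largest, ties broken by evicting the least recently requested. Access graph: a graph $G$ whose vertices are the pages; a request sequence respects $G$ if any two consecutive requests are identical or adjacent in $G$; $L(G)$ is the set of such sequences. Relative interval: $\mathrm{Min}_{\mathcal{A},\mathcal{B}}(n,G)=\min\{\mathcal{A}(I)-\mathcal{B}(I): I\in L(G),|I|=n\}$, $\mathrm{Max}_{\mathcal{A},\mathcal{B}}(n,G)$ analogously with max; $\mathrm{Min}^G(\mathcal{A},\mathcal{B})=\liminf_{n\to\infty}\mathrm{Min}_{\mathcal{A},\mathcal{B}}(n,G)/n$, $\mathrm{Max}^G(\mathcal{A},\mathcal{B})=\limsup_{n\to\infty}\mathrm{Max}_{\mathcal{A},\mathcal{B}}(n,G)/n$,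 and $\mathcal{I}^G[\mathcal{A},\mathcal{B}]=[\mathrm{Min}^G(\mathcal{A},\mathcal{B}),\mathrm{Max}^G(\mathcal{A},\mathcal{B})]$. *)

From HB Require Import structures.
From mathcomp Require Import all_boot all_order all_algebra.
From mathcomp Require Import boolp classical_sets reals constructive_ereal ereal sequences.
Set Implicit Arguments. Unset Strict Implicit. Unset Printing Implicit Defensive.
Import Order.TTheory GRing.Theory Num.Theory.

Section Paging.
Variable T : finType.

(** Access graphs: a relation [e] on the finite set of pages [T]. *)

Definition adj (e : rel T) : rel T := fun x y => (x == y) || e x y.

Definition respects (e : rel T) (s : seq T) : bool := sorted (adj e) s.

Definition ball (e : rel T) (n : nat) (x : T) : {set T} :=
  iter n (fun B => (B :|: [set z | [exists y in B, e y z]])%SET) [set x]%SET.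

(** Graph distance; unreachable vertices get distance #|T|, which exceeds
    every finite distance (acts as infinity). *)
Definition gdist (e : rel T) (x y : T) : nat :=
  find (fun n => y \in ball e n x) (iota 0 #|T|).

(** LRU: cache is a list ordered by recency (most recent first). *)
Definition lru_step (k : nat) (st : seq T * nat) (p : T) : seq T * nat :=
  let: (c, f) := st in
  if p \in c then (p :: rem p c, f)
  else (p :: (if k <= size c then take (size c).-1 c else c), f.+1).

Definition LRU (k : nat) (I : seq T) : nat := (foldl (lru_step k) ([::], 0) I).2.

Definition fwf_step (k : nat) (st : seq T * nat) (p : T) : seq T * nat :=
  let: (c, f) := st in
  if p \in c then (c, f)
  else ((if k <= size c then [:: p] else p :: c), f.+1).

Definition FWF (k : nat) (I : seq T) : nat := (foldl (fwf_step k) ([::], 0) I).2.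

(** FAR: state = (cache ordered by recency, marked set, faults). *)
Definition far_step (e : rel T) (k : nat) (st : seq T * {set T} * nat) (p : T)
  : seq T * {set T} * nat :=
  let: (c, m, f) := st in
  if p \in c then (p :: rem p c, (p |: m)%SET, f)
  else
    let full := k <= size c in
    let m1 := if full && all (fun x => x \in m) c then (@finset.set0 T) else m in
    let m2 := (p |: m1)%SET in
    let dn x := \big[minn/#|T|]_(y in m2) gdist e x y in
    let cands := [seq x <- c | x \notin m2] in
    let dmax := \max_(x <- cands) dn x in
    let victim := last p [seq x <- cands | dn x == dmax] in
    (p :: (if full then rem victim c else c), m2, f.+1).

Definition FAR (e : rel T) (k : nat) (I : seq T) : nat :=
  (foldl (far_step e k) ([::], (@finset.set0 T), 0) I).2.

Variable R : realType.
Local Open Scope ring_scope.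
Local Open Scope ereal_scope.

Definition MinAB (e : rel T) (A B : seq T -> nat) (n : nat) : \bar R :=
  \big[Order.min/+oo]_(s : n.-tuple T | respects e s)
     ((A s)%:R - (B s)%:R : R)%:E.

Definition MaxAB (e : rel T) (A B : seq T -> nat) (n : nat) : \bar R :=
  \big[Order.max/-oo]_(s : n.-tuple T | respects e s)
     ((A s)%:R - (B s)%:R : R)%:E.

(** I^G[A,B] = [Min^G(A,B), Max^G(A,B)], represented by its endpoints. *)
Definition rel_interval (e : rel T) (A B : seq T -> nat) : \bar R * \bar R :=
  (limn_einf (fun n => MinAB e A B n * (n%:R^-1)%:E),
   limn_esup (fun n => MaxAB e A B n * (n%:R^-1)%:E)).

End Paging.

Definition pathN (N : nat) : rel 'I_N := fun i j => (i.+1 == j) || (j.+1 == i).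
Arguments pathN N : clear implicits.

From Pilot Require Import Defs.
From mathcomp Require Import all_boot all_order all_algebra.
From mathcomp Require Import boolp classical_sets reals constructive_ereal ereal.
From mathcomp Require Import topology normedtype sequences.
From mathcomp Require Import zify lra.
Import Order.TTheory GRing.Theory Num.Theory numFieldNormedType.Exports.
Set Implicit Arguments. Unset Strict Implicit. Unset Printing Implicit Defensive.

(* Whenever FWF hits, LRU and FAR hit as well: LRU keeps FWF's cache among its most
   recently used pages, and FAR's marked pages are exactly FWF's cache. Moreover,
   when FWF flushes, LRU and FAR fault too. As FWF faults at most k times between two
   flushes, 0 <= FWF(I) - A(I) <= (1 - 1/k) |I| + 1 for A = LRU, FAR.
   Both bounds are tight up to O(1). A constant sequence costs one fault to every
   algorithm. Walking back and forth along a path x0 ... xk of k + 1 pages, FWF faults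
   on every request, since its cache fills up just before each endpoint is reached,
   whereas LRU faults only at the endpoints; so does FAR, provided each endpoint is
   farther from the other one than all inner pages of the path, as on P_N. *)

Arguments fwf_step : simpl never.
Arguments lru_step : simpl never.
Arguments far_step : simpl never.

Section SeqLemmas.
Variable T : eqType.

Lemma take_rem_in (s : seq T) d p :
  p \in take d s -> rem p (take d s) = take d.-1 (rem p s).
Proof.
elim: s d => [|y s IH] [|d] //=; case: eqP => [->|/eqP yp] //=.
rewrite inE eq_sym (negbTE yp) /=; case: d IH => [|d] IH; first by rewrite take0.
by move=> /IH ->.
Qed.

Lemma take_rem_notin (s : seq T) d p : p \notin take d s -> take d (rem p s) = take d s.
Proof.
elim: s d => [|y s IH] [|d] //=; first by rewrite take0.
by rewrite inE negb_or => /andP[py /IH eq_take]; rewrite eq_sym (negbTE py) /= eq_take.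
Qed.

Lemma rem_cat_notin (a b : seq T) p : p \notin a -> rem p (a ++ b) = a ++ rem p b.
Proof.
elim: a => [|x a IH] //=; rewrite inE negb_or => /andP[px pa].
by rewrite eq_sym (negbTE px) IH.
Qed.

Lemma uniq_cons_cat (b c : seq T) p : uniq ((p :: b) ++ c) -> uniq (b ++ p :: c).
Proof. by rewrite -(cat1s p c) uniq_catCA. Qed.

Lemma uniq_max_size_sub (s1 s2 : seq T) n : uniq s1 -> size s1 = n -> size s2 <= n ->
  {subset s1 <= s2} -> {subset s2 <= s1}.
Proof.
move=> u1 s1n s2n sub x xs2.
by have [_ ->] := uniq_min_size u1 sub (leq_trans s2n (eq_leq (esym s1n))).
Qed.

Lemma bigmax_seq_mem (F : T -> nat) (s : seq T) :
  s != [::] -> \max_(i <- s) F i \in map F s.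
Proof.
elim: s => [|x [|y s] IH] //= _; rewrite big_cons inE; first by rewrite big_nil maxn0 eqxx.
by rewrite /maxn; case: ifP => _; rewrite ?eqxx // IH ?orbT.
Qed.

Lemma last_argmax_mem (F : T -> nat) (s : seq T) x0 :
  s != [::] -> last x0 [seq x <- s | F x == \max_(y <- s) F y] \in s.
Proof.
move=> /(bigmax_seq_mem F) /mapP[x xs xmax].
have : x \in [seq x <- s | F x == \max_(y <- s) F y] by rewrite mem_filter xs xmax eqxx.
case E : [seq _ <- s | _] => [|y L] //= _.
by have := mem_last y L; rewrite -E mem_filter => /andP[].
Qed.

End SeqLemmas.

Lemma subrel_adj (T : finType) (e : rel T) : subrel e (adj e).
Proof. by move=> x y exy; rewrite /adj exy orbT. Qed.

Section Caching.
Variables (T : finType) (k : nat) (e : rel T).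
Hypothesis k_gt0 : 0 < k.

Definition fwf_cache (c : seq T) (p : T) : seq T :=
  if p \in c then c else if k <= size c then [:: p] else p :: c.

Lemma fwf_stepE (c : seq T) f p :
  fwf_step k (c, f) p = (fwf_cache c p, if p \in c then f else f.+1).
Proof. by rewrite /fwf_step /fwf_cache; case: ifP. Qed.

Lemma fwf_cache_uniq (c : seq T) p : uniq c -> uniq (fwf_cache c p).
Proof. by rewrite /fwf_cache; case: ifP => // pc; case: ifP => //= _ ->; rewrite pc. Qed.

Lemma fwf_cache_size (c : seq T) p : size c <= k -> size (fwf_cache c p) <= k.
Proof. by rewrite /fwf_cache; case: ifP => // _; case: ifP => //= kc; rewrite ltnNge kc. Qed.

Lemma fwf_foldl_size (c : seq T) f I :
  size c <= k -> size (foldl (fwf_step k) (c, f) I).1 <= k.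
Proof. by elim: I c f => [|p I IH] c f //= sc; rewrite fwf_stepE IH ?fwf_cache_size. Qed.

Section Algorithm.
Variables (S : Type) (step : S -> T -> S) (cache : S -> seq T) (faults : S -> nat).
Hypothesis faults_hit : forall s p, p \in cache s -> faults (step s p) = faults s.
Hypothesis faults_miss : forall s p, p \notin cache s -> faults (step s p) = (faults s).+1.

Lemma faults_step s p : faults s <= faults (step s p) <= (faults s).+1.
Proof.
by case: (boolP (p \in cache s)) => [/faults_hit|/faults_miss] ->; rewrite leqnn leqnSn.
Qed.

Lemma faults_foldl s I : faults s <= faults (foldl step s I) <= faults s + size I.
Proof.
elim: I s => [|p I IH] s /=; first by rewrite addn0 leqnn.
have /andP[le_s le_sS] := faults_step s p; have /andP[le_I le_IS] := IH (step s p).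
by rewrite (leq_trans le_s le_I) (leq_trans le_IS) // addnS -addSn leq_add2r.
Qed.

Lemma faults_foldl_miss s p I :
  p \notin cache s -> (faults s).+1 <= faults (foldl step s (p :: I)).
Proof. by move=> /faults_miss <- /=; case/andP: (faults_foldl (step s p) I). Qed.

Section FWFSimulation.
Variable tracks : seq T -> S -> Prop.
Hypothesis tracks_step : forall cF s p, tracks cF s -> uniq cF -> size cF <= k ->
  tracks (fwf_cache cF p) (step s p).
Hypothesis tracks_sub : forall cF s, tracks cF s -> {subset cF <= cache s}.
Hypothesis tracks_full : forall cF s, tracks cF s -> uniq cF -> size cF = k ->
  {subset cache s <= cF}.

(* Potential argument: [k * FWF - |FWF cache|] grows by [k - 1] on a fault that fills
   FWF's cache, and by [2k - 1] on a flush, where the simulated algorithm faults too. *)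
Lemma fwf_sim_foldl I (cF : seq T) fF s n :
  tracks cF s -> uniq cF -> size cF <= k -> faults s <= fF ->
  k * fF <= k * faults s + (k - 1) * n + size cF ->
  let: (cF', fF') := foldl (fwf_step k) (cF, fF) I in
  faults (foldl step s I) <= fF' /\
  k * fF' <= k * faults (foldl step s I) + (k - 1) * (n + size I) + size cF'.
Proof.
elim: I cF fF s n => [|p I IH] cF fF s n tr uF sF le_fF pot /=; first by rewrite addn0.
rewrite fwf_stepE -addSnnS.
have /andP[le_s le_sS] := faults_step s p.
suff [] : faults (step s p) <= (if p \in cF then fF else fF.+1) /\
    k * (if p \in cF then fF else fF.+1) <=
    k * faults (step s p) + (k - 1) * n.+1 + size (fwf_cache cF p).
  by apply: IH; rewrite ?fwf_cache_uniq ?fwf_cache_size //; apply: tracks_step.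
rewrite /fwf_cache; case: (boolP (p \in cF)) => [pF|pF].
  by rewrite faults_hit ?(tracks_sub tr) //; split => //; lia.
case: ifP => [kF|/negbT kF] /=; last by split; nia.
have sFk : size cF = k by apply/eqP; rewrite eqn_leq sF kF.
rewrite faults_miss; last by apply: contra pF; apply: (tracks_full tr).
by rewrite sFk in pot; split; nia.
Qed.

Lemma fwf_sim_bounds I s : tracks [::] s -> faults s = 0 ->
  faults (foldl step s I) <= FWF k I /\
  k * FWF k I <= k * faults (foldl step s I) + (k - 1) * size I + k.
Proof.
move=> tr s0; rewrite /FWF.
have := @fwf_sim_foldl I [::] 0 s 0 tr isT (leq0n _); rewrite s0 muln0 => /(_ isT isT).
have := @fwf_foldl_size [::] 0 I isT.
case: (foldl _ _ _) => cF fF /= sF [-> pot]; split => //.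
by rewrite (leq_trans pot) // leq_add2l.
Qed.

End FWFSimulation.

End Algorithm.

Lemma fwf_faults_hit (s : seq T * nat) p : p \in s.1 -> (fwf_step k s p).2 = s.2.
Proof. by case: s => c f /= pc; rewrite fwf_stepE pc. Qed.

Lemma fwf_faults_miss (s : seq T * nat) p : p \notin s.1 -> (fwf_step k s p).2 = s.2.+1.
Proof. by case: s => c f /= /negbTE pc; rewrite fwf_stepE pc. Qed.

Lemma FWF_cat (I J : seq T) : FWF k I <= FWF k (I ++ J).
Proof.
rewrite /FWF foldl_cat; case/andP: (faults_foldl fwf_faults_hit fwf_faults_miss
  (foldl (@fwf_step T k) ([::], 0) I) J) => //.
Qed.

Lemma lru_hit (c : seq T) f p : p \in c -> lru_step k (c, f) p = (p :: rem p c, f).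
Proof. by rewrite /lru_step => ->. Qed.

Lemma lru_stepE (c : seq T) f p : size c <= k ->
  lru_step k (c, f) p = (p :: take k.-1 (rem p c), if p \in c then f else f.+1).
Proof.
move=> sc; rewrite /lru_step; case: ifP => pc.
  by rewrite take_oversize // size_rem // -!subn1 leq_sub2r.
rewrite rem_id ?pc //; case: ifP => [kc|/negbT]; last first.
  by rewrite -ltnNge => lt_ck; rewrite take_oversize // -ltnS prednK.
by have -> : size c = k by apply/eqP; rewrite eqn_leq sc kc.
Qed.

Lemma lru_faults_hit (s : seq T * nat) p : p \in s.1 -> (lru_step k s p).2 = s.2.
Proof. by case: s => c f /= pc; rewrite lru_hit. Qed.

Lemma lru_faults_miss (s : seq T * nat) p : p \notin s.1 -> (lru_step k s p).2 = s.2.+1.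
Proof. by case: s => c f /= /negbTE pc; rewrite /lru_step pc. Qed.

Lemma LRU_cat (I J : seq T) : LRU k (I ++ J) <= LRU k I + size J.
Proof.
rewrite /LRU foldl_cat; case/andP: (faults_foldl lru_faults_hit lru_faults_miss
  (foldl (lru_step k) ([::], 0) I) J) => //.
Qed.

Definition lru_tracks (cF c : seq T) :=
  [/\ uniq c, size c <= k & {subset cF <= take (size cF) c}].

Lemma lru_tracks_step (cF c : seq T) f p : uniq cF -> size cF <= k ->
  lru_tracks cF c -> lru_tracks (fwf_cache cF p) (lru_step k (c, f) p).1.
Proof.
move=> uF sF [uc sc sub]; set d := size cF in sF sub *.
have le_take : size (take d c) <= d by rewrite size_take_min geq_minl.
have [_ eqF] := uniq_min_size uF sub le_take.
rewrite lru_stepE //=; split.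
- rewrite /= (take_uniq _ (rem_uniq _ uc)) andbT.
  by apply/negP => /mem_take; rewrite mem_rem_uniqF.
- by rewrite /= size_take_min (leq_ltn_trans (geq_minl _ _)) // ltn_predL.
rewrite /fwf_cache; case: ifP => [pF|/negbT pF].
  have d_gt0 : 0 < d by rewrite /d; case: (cF) pF.
  have pT : p \in take d c by rewrite -eqF.
  rewrite -/d -(prednK d_gt0) /= take_takel; last by rewrite -!subn1 leq_sub2r.
  move=> x xF; rewrite inE -take_rem_in // (mem_rem_uniq _ (take_uniq _ uc)) !inE -eqF xF.
  by case: eqP.
case: ifP => [_ x|/negbT kF x]; first by rewrite /= take0.
have pT : p \notin take d c by rewrite -eqF.
rewrite /= -/d take_takel; last by rewrite -ltnS prednK // ltnNge.
by rewrite take_rem_notin // !inE => /orP[->|/sub ->]; rewrite ?orbT.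
Qed.

Lemma LRU_bounds (I : seq T) :
  LRU k I <= FWF k I /\ k * FWF k I <= k * LRU k I + (k - 1) * size I + k.
Proof.
apply: (@fwf_sim_bounds _ _ _ _ lru_faults_hit lru_faults_miss
  (fun cF s => lru_tracks cF s.1)) => //.
- by move=> cF [c f] p tr uF sF; apply: lru_tracks_step.
- by move=> cF [c f] [_ _ sub] x /sub /mem_take.
- move=> cF [c f] [_ sc sub] uF sF; apply: (@uniq_max_size_sub _ _ _ k) => // x /sub.
  by rewrite sF take_oversize.
Qed.

Definition far_marks (c : seq T) (m : {set T}) (p : T) : {set T} :=
  (p |: (if (k <= size c) && all (fun x => x \in m) c then finset.set0 else m))%SET.

Lemma far_hit (c : seq T) m f p :
  p \in c -> far_step e k (c, m, f) p = (p :: rem p c, (p |: m)%SET, f).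
Proof. by move=> pc; rewrite /far_step pc. Qed.

Lemma far_missE (c : seq T) m f p : p \notin c -> exists2 v,
  far_step e k (c, m, f) p =
    (p :: (if k <= size c then rem v c else c), far_marks c m p, f.+1) &
  has (fun x => x \notin far_marks c m p) c -> v \in c /\ v \notin far_marks c m p.
Proof.
move=> pc; rewrite /far_step (negbTE pc); eexists; first reflexivity.
rewrite -/(far_marks c m p) has_filter => /last_argmax_mem victim.
by apply/andP; rewrite andbC -(mem_filter (fun x => x \notin far_marks c m p)); apply: victim.
Qed.

Lemma far_faults_hit (s : seq T * {set T} * nat) p :
  p \in s.1.1 -> (far_step e k s p).2 = s.2.
Proof. by case: s => [[c m] f] /= pc; rewrite far_hit. Qed.

Lemma far_faults_miss (s : seq T * {set T} * nat) p :
  p \notin s.1.1 -> (far_step e k s p).2 = s.2.+1.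
Proof. by case: s => [[c m] f] /= /(far_missE m f) [v ->]. Qed.

Lemma FAR_cat (I J : seq T) : FAR e k (I ++ J) <= FAR e k I + size J.
Proof.
rewrite /FAR foldl_cat; case/andP: (faults_foldl far_faults_hit far_faults_miss
  (foldl (far_step e k) ([::], finset.set0, 0) I) J) => //.
Qed.

Definition far_tracks (cF c : seq T) (m : {set T}) :=
  [/\ uniq c, size c <= k, m = [set x in cF] & {subset cF <= c}].

Lemma far_tracks_hit (cF cF' c : seq T) m p : far_tracks cF c m -> p \in c ->
  {subset cF' <= p :: cF} -> (p |: [set x in cF])%SET = [set x in cF'] ->
  far_tracks cF' (p :: rem p c) (p |: m)%SET.
Proof.
move=> [uc sc -> sub] pc sub' marks; split => //=.
- by rewrite mem_rem_uniqF // rem_uniq.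
- by rewrite size_rem // prednK //; case: (c) pc.
- move=> x /sub'; rewrite !inE (mem_rem_uniq _ uc) inE.
  by case: eqP => //= _ /sub.
Qed.

Lemma far_tracks_flush (cF c : seq T) m f p : uniq cF -> size cF = k ->
  far_tracks cF c m -> p \notin cF ->
  let: (c', m', _) := far_step e k (c, m, f) p in far_tracks [:: p] c' m'.
Proof.
move=> uF sF [uc sc -> sub] pF.
have [szc eqc] := uniq_min_size uF sub (leq_trans sc (eq_leq (esym sF))).
have pc : p \notin c by rewrite -eqc.
have full : (k <= size c) && all (fun x => x \in [set x in cF]) c.
  by rewrite -szc sF leqnn; apply/allP => x; rewrite inE eqc.
have [v ->] := far_missE [set x in cF] f pc.
rewrite /far_marks full finset.setU0 (andP full).1 => victim.
have [vc _] : v \in c /\ v \notin [set p]; last split.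
- apply: victim; apply/hasP; exists (nth p c 0); first by rewrite mem_nth // -szc sF.
  by rewrite inE; apply: contra pc => /eqP <-; rewrite mem_nth // -szc sF.
- by rewrite /= rem_uniq // andbT; apply: contra pc; apply: mem_rem.
- by rewrite /= size_rem // -szc sF prednK.
- by apply/setP => x; rewrite !inE.
- by move=> x; rewrite inE => /eqP ->; apply: mem_head.
Qed.

Lemma far_tracks_miss (cF c : seq T) m f p : uniq cF -> size cF < k ->
  far_tracks cF c m -> p \notin c ->
  let: (c', m', _) := far_step e k (c, m, f) p in far_tracks (p :: cF) c' m'.
Proof.
move=> uF sF [uc sc -> sub] pc.
have not_all : (k <= size c) ==> ~~ all (fun x => x \in [set x in cF]) c.
  apply/implyP => kc; apply/allP => all_cF.
  have : size c <= size cF by apply: uniq_leq_size => // x /all_cF; rewrite inE.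
  by lia.
have marks : (p |: [set x in cF])%SET = [set x in p :: cF] by apply/setP => x; rewrite !inE.
have [v -> victim] := far_missE [set x in cF] f pc.
case: (boolP (k <= size c)) => kc; last first.
  rewrite /far_marks (negbTE kc) marks; split => //=; first by rewrite pc.
    by rewrite ltnNge.
  by move=> x; rewrite !inE => /orP[->|/sub ->]; rewrite ?orbT.
have marksE : far_marks c [set x in cF] p = [set x in p :: cF].
  by rewrite /far_marks kc (negbTE (implyP not_all kc)) marks.
rewrite marksE in victim *.
have [vc vm] : v \in c /\ v \notin [set x in p :: cF].
  apply: victim; have /allPn[x xc xm] := implyP not_all kc.
  apply/hasP; exists x => //; rewrite inE in xm.
  by rewrite !inE negb_or xm andbT; apply: contra pc => /eqP <-.
split => //=.
- by rewrite rem_uniq // andbT; apply: contra pc; apply: mem_rem.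
- by rewrite size_rem // prednK // (leq_trans k_gt0 kc).
- move=> x; rewrite !inE (mem_rem_uniq _ uc) inE; case: eqP => //= _ xF.
  by rewrite sub // andbT; apply: contra vm => /eqP <-; rewrite !inE xF orbT.
Qed.

Lemma far_tracks_step (cF c : seq T) m f p : uniq cF -> size cF <= k ->
  far_tracks cF c m ->
  let: (c', m', _) := far_step e k (c, m, f) p in far_tracks (fwf_cache cF p) c' m'.
Proof.
move=> uF sF tr; have [_ _ _ sub] := tr.
rewrite /fwf_cache; case: ifP => [pF|/negbT pF].
  rewrite far_hit ?sub //; apply: far_tracks_hit tr (sub _ pF) _ _.
    by move=> x xF; rewrite inE xF orbT.
  by apply/setP => x; rewrite !inE; case: eqP => // ->.
case: ifP => [kF|/negbT]; last rewrite -ltnNge => kF.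
  have sFk : size cF = k by apply/eqP; rewrite eqn_leq sF kF.
  exact: far_tracks_flush uF sFk tr pF.
case: (boolP (p \in c)) => pc; last exact: far_tracks_miss.
rewrite far_hit //; apply: far_tracks_hit tr pc _ _ => //.
by apply/setP => x; rewrite !inE.
Qed.

Lemma FAR_bounds (I : seq T) :
  FAR e k I <= FWF k I /\ k * FWF k I <= k * FAR e k I + (k - 1) * size I + k.
Proof.
apply: (@fwf_sim_bounds _ _ _ _ far_faults_hit far_faults_miss
  (fun cF s => far_tracks cF s.1.1 s.1.2)) => //.
- move=> cF [[c m] f] p tr uF sF.
  by have := far_tracks_step f p uF sF tr; case: far_step => [[]].
- by move=> cF [[c m] f] [].
- by move=> cF [[c m] f] [_ sc _ sub] uF sF; apply: (@uniq_max_size_sub _ _ _ k).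
Qed.

Lemma fill_step (b c : seq T) p : size c + (size b).+1 <= k -> uniq ((p :: b) ++ c) ->
  [/\ p \notin c, (k <= size c) = false, size (p :: c) + size b <= k & uniq (b ++ p :: c)].
Proof.
move=> sz ubc; split; last exact: uniq_cons_cat.
- by case/andP: ubc; rewrite mem_cat negb_or => /andP[].
- by apply/negbTE; rewrite -ltnNge; lia.
- by rewrite /=; lia.
Qed.

Lemma fwf_fill (b c : seq T) f : size c + size b <= k -> uniq (b ++ c) ->
  foldl (fwf_step k) (c, f) b = (rev b ++ c, f + size b).
Proof.
elim: b c f => [|p b IH] c f /=; first by rewrite !addn0.
move=> /fill_step/[apply] -[pc kc sz u].
rewrite fwf_stepE /fwf_cache (negbTE pc) kc /= IH //.
by rewrite rev_cons cat_rcons addnS.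
Qed.

Lemma fwf_flush_fill (b c : seq T) f p : size b = k.-1 -> uniq (p :: b) ->
  p \notin c -> size c = k ->
  foldl (fwf_step k) (c, f) (p :: b) = (rev (p :: b), f + k).
Proof.
move=> sb ub pc sc; rewrite /= fwf_stepE /fwf_cache (negbTE pc) sc leqnn /=.
rewrite fwf_fill; last by rewrite uniq_catC.
  by rewrite rev_cons cats1 sb addSnnS prednK.
by rewrite sb add1n prednK.
Qed.

Lemma lru_fill (b c : seq T) f : size c + size b <= k -> uniq (b ++ c) ->
  foldl (lru_step k) (c, f) b = (rev b ++ c, f + size b).
Proof.
elim: b c f => [|p b IH] c f /=; first by rewrite !addn0.
move=> /fill_step/[apply] -[pc kc sz u].
rewrite /lru_step (negbTE pc) kc IH //.
by rewrite rev_cons cat_rcons addnS.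
Qed.

Lemma far_fill (b c : seq T) m f : size c + size b <= k -> uniq (b ++ c) ->
  foldl (far_step e k) (c, m, f) b = (rev b ++ c, ([set x in b] :|: m)%SET, f + size b).
Proof.
elim: b c m f => [|p b IH] c m f /=.
  by rewrite !addn0 => _ _; congr (_, _, _); apply/setP => x; rewrite !inE.
move=> /fill_step/[apply] -[pc kc sz u].
have [v -> _] := far_missE m f pc; rewrite /far_marks kc /= IH //.
rewrite rev_cons cat_rcons addnS; congr (_, _, _).
by apply/setP => x; rewrite !inE orbCA orbA.
Qed.

Lemma lru_hits (w a : seq T) f : uniq (a ++ w) ->
  foldl (lru_step k) (a ++ w, f) w = (rev w ++ a, f).
Proof.
elim: w a => [|p w IH] a /=; first by rewrite cats0.
move=> u; have pa : p \notin a by move: u; rewrite cat_uniq /= => /and3P[_ /norP[]].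
rewrite lru_hit ?mem_cat ?mem_head ?orbT // rem_cat_notin //= eqxx.
rewrite -cat1s catA IH; last by rewrite -catA uniq_catCA.
by rewrite rev_cons cat_rcons.
Qed.

Lemma far_hits (w a : seq T) m f : uniq (a ++ w) ->
  foldl (far_step e k) (a ++ w, m, f) w = (rev w ++ a, ([set x in w] :|: m)%SET, f).
Proof.
elim: w a m => [|p w IH] a m /=.
  by rewrite cats0 => _; congr (_, _, _); apply/setP => x; rewrite !inE.
move=> u; have pa : p \notin a by move: u; rewrite cat_uniq /= => /and3P[_ /norP[]].
rewrite far_hit ?mem_cat ?mem_head ?orbT // rem_cat_notin //= eqxx.
rewrite -cat1s catA IH; last by rewrite -catA uniq_catCA.
rewrite rev_cons cat_rcons; congr (_, _, _).
by apply/setP => x; rewrite !inE orbCA orbA.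
Qed.

Lemma gdist_le x z : gdist e x z <= #|T|.
Proof. by rewrite /gdist (leq_trans (find_size _ _)) // size_iota. Qed.

Lemma far_evict (c : seq T) (m : {set T}) f p w : uniq c -> size c = k -> {subset c <= m} ->
  p \notin c -> w \in c -> (forall x, x \in c -> x != w -> gdist e x p < gdist e w p) ->
  far_step e k (c, m, f) p = (p :: rem w c, [set p]%SET, f.+1).
Proof.
move=> uc sc cm pc wc farthest.
rewrite /far_step (negbTE pc) sc leqnn (introT allP cm) /= finset.setU0.
have distE x : \big[minn/#|T|]_(y in [set p]%SET) gdist e x y = gdist e x p.
  rewrite -big_filter (eq_filter (a2 := pred1 p)) => [|z]; last by rewrite inE.
  rewrite filter_pred1_uniq ?index_enum_uniq ?mem_index_enum // big_cons big_nil.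
  exact/minn_idPl/gdist_le.
have -> : [seq x <- c | x \notin [set p]%SET] = c.
  by apply/all_filterP/allP => x xc; rewrite inE; apply: contra pc => /eqP <-.
under eq_bigr => x _ do rewrite distE.
have -> : \max_(x <- c) gdist e x p = gdist e w p.
  apply/eqP; rewrite eqn_leq (@leq_bigmax_seq _ c xpredT (gdist e ^~ p) w) // andbT.
  apply/bigmax_leqP_seq => x xc _; case: (eqVneq x w) => [-> //|xw].
  exact: ltnW (farthest x xc xw).
rewrite (eq_in_filter (a2 := pred1 w)) ?filter_pred1_uniq // => x xc /=.
rewrite distE; case: (eqVneq x w) => [->|xw]; first by rewrite !eqxx.
by rewrite (ltn_eqF (farthest x xc xw)).
Qed.

Section Sweeps.
Variables (x0 y : T) (u : seq T).
Hypothesis size_u : size u = k.-1.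
Hypothesis uniq_path : uniq (x0 :: rcons u y).

Definition sweep_fwd := x0 :: u.
Definition sweep_bwd := y :: rev u.

Local Notation round := (sweep_bwd ++ sweep_fwd).

Definition sweeps q := iter q (cat^~ round) sweep_fwd.

Lemma uniq_path_facts : [/\ x0 \notin u, y \notin u, x0 != y & uniq u].
Proof.
move: uniq_path; rewrite /= mem_rcons inE negb_or rcons_uniq.
by case/andP=> /andP[x0y x0u] /andP[yu uu].
Qed.

Lemma size_sweep_fwd : size sweep_fwd = k. Proof. by rewrite /= size_u prednK. Qed.
Lemma size_sweep_bwd : size sweep_bwd = k. Proof. by rewrite /= size_rev size_u prednK. Qed.

Lemma size_sweeps q : size (sweeps q) = k + q * (2 * k).
Proof.
elim: q => [|q IH]; first by rewrite size_sweep_fwd addn0.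
by rewrite /sweeps iterS -/(sweeps q) !size_cat IH size_sweep_fwd size_sweep_bwd; lia.
Qed.

Lemma rev_sweep_fwd : rev sweep_fwd = rev u ++ [:: x0].
Proof. by rewrite rev_cons cats1. Qed.

Lemma fwf_round f :
  foldl (fwf_step k) (rev sweep_fwd, f) round = (rev sweep_fwd, f + 2 * k).
Proof.
have [x0u yu x0y uu] := uniq_path_facts.
rewrite foldl_cat (@fwf_flush_fill (rev u) _ _ y) ?size_rev ?size_sweep_fwd //; first last.
- by rewrite mem_rev inE negb_or eq_sym x0y.
- by rewrite /= mem_rev yu rev_uniq.
rewrite (@fwf_flush_fill u _ _ x0) ?size_rev ?size_sweep_bwd //=; first last.
- by rewrite mem_rev inE negb_or x0y mem_rev.
- by rewrite x0u.
by rewrite -addnA addnn mul2n.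
Qed.

Lemma fwf_sweeps q :
  foldl (fwf_step k) ([::], 0) (sweeps q) = (rev sweep_fwd, k + q * (2 * k)).
Proof.
have [x0u _ _ uu] := uniq_path_facts.
elim: q => [|q IH]; first by rewrite addn0 fwf_fill ?cats0 ?size_sweep_fwd //= x0u.
by rewrite /sweeps iterS -/(sweeps q) foldl_cat IH fwf_round mulSn; congr (_, _); lia.
Qed.

Lemma FWF_sweeps q : FWF k (sweeps q) = k + q * (2 * k).
Proof. by rewrite /FWF fwf_sweeps. Qed.

Lemma lru_round f :
  foldl (lru_step k) (rev sweep_fwd, f) round = (rev sweep_fwd, f + 2).
Proof.
have [x0u yu x0y uu] := uniq_path_facts.
have size_ru : size (rev u) = k.-1 by rewrite size_rev.
have size_u0 : size (rev u ++ [:: x0]) = k by rewrite -rev_sweep_fwd size_rev size_sweep_fwd.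
have size_uy : size (u ++ [:: y]) = k by rewrite size_cat size_u addn1 prednK.
have y_notin : y \notin rev u ++ [:: x0].
  by rewrite mem_cat mem_rev negb_or yu inE eq_sym x0y.
have x0_notin : x0 \notin u ++ [:: y] by rewrite mem_cat negb_or x0u inE x0y.
rewrite rev_sweep_fwd foldl_cat /= lru_stepE ?size_u0 // rem_id // (negbTE y_notin).
rewrite (take_size_cat _ size_ru) -cat1s lru_hits; last by rewrite /= mem_rev yu rev_uniq.
rewrite revK lru_stepE ?size_uy // rem_id // (negbTE x0_notin).
by rewrite (take_size_cat _ size_u) -cat1s lru_hits /= ?x0u // addn2.
Qed.

Lemma LRU_sweeps q : LRU k (sweeps q) = k + 2 * q.
Proof.
have [x0u _ _ uu] := uniq_path_facts.
rewrite /LRU; suff -> : foldl (lru_step k) ([::], 0) (sweeps q) = (rev sweep_fwd, k + 2 * q).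
  by [].
elim: q => [|q IH]; first by rewrite addn0 lru_fill ?cats0 ?size_sweep_fwd //= x0u.
by rewrite /sweeps iterS -/(sweeps q) foldl_cat IH lru_round; congr (_, _); lia.
Qed.

Section FarthestEndpoints.
Hypothesis y_farthest_x0 : forall x, x \in u -> gdist e x y < gdist e x0 y.
Hypothesis x0_farthest_y : forall x, x \in u -> gdist e x x0 < gdist e y x0.

Lemma far_round f :
  foldl (far_step e k) (rev sweep_fwd, [set x in sweep_fwd]%SET, f) round =
  (rev sweep_fwd, [set x in sweep_fwd]%SET, f + 2).
Proof.
have [x0u yu x0y uu] := uniq_path_facts.
rewrite rev_sweep_fwd foldl_cat /= (@far_evict _ _ _ _ x0); first last.
- by move=> x; rewrite mem_cat mem_rev inE => /orP[/y_farthest_x0 //|/eqP ->]; rewrite eqxx.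
- by rewrite mem_cat inE eqxx orbT.
- by rewrite mem_cat mem_rev negb_or yu inE eq_sym x0y.
- by move=> x; rewrite !inE mem_cat mem_rev inE orbC.
- by rewrite -rev_sweep_fwd size_rev size_sweep_fwd.
- by rewrite -rev_sweep_fwd rev_uniq /= x0u.
rewrite rem_cat_notin ?mem_rev //= eqxx cats0 -cat1s far_hits; last first.
  by rewrite /= mem_rev yu rev_uniq.
rewrite revK (@far_evict _ _ _ _ y); first last.
- by move=> x; rewrite mem_cat inE => /orP[/x0_farthest_y //|/eqP ->]; rewrite eqxx.
- by rewrite mem_cat inE eqxx orbT.
- by rewrite mem_cat negb_or x0u inE x0y.
- by move=> x; rewrite !inE mem_cat mem_rev inE orbC.
- by rewrite size_cat size_u addn1 prednK.
- by rewrite cats1 rcons_uniq yu uu.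
rewrite rem_cat_notin //= eqxx cats0 -cat1s far_hits /= ?x0u // addn2.
by congr (_, _, _); apply/setP => x; rewrite !inE orbC.
Qed.

Lemma FAR_sweeps q : FAR e k (sweeps q) = k + 2 * q.
Proof.
have [x0u _ _ uu] := uniq_path_facts.
rewrite /FAR; suff -> : foldl (far_step e k) ([::], finset.set0, 0) (sweeps q) =
  (rev sweep_fwd, [set x in sweep_fwd]%SET, k + 2 * q) by [].
elim: q => [|q IH].
  rewrite addn0 far_fill ?cats0 ?size_sweep_fwd //= ?x0u //.
  by congr (_, _, _); apply/setP => x; rewrite !inE orbF.
by rewrite /sweeps iterS -/(sweeps q) foldl_cat IH far_round; congr (_, _, _); lia.
Qed.

End FarthestEndpoints.

Lemma last_sweeps z q : last z (sweeps q) = last x0 u.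
Proof. by case: q => [|q] //; rewrite /sweeps iterS !last_cat. Qed.

Hypothesis e_sym : symmetric e.
Hypothesis e_path : path e x0 (rcons u y).

Lemma round_path : path (adj e) (last x0 u) round.
Proof.
have := e_path; rewrite rcons_path => /andP[path_u last_y].
have path_back : path e y (rcons (rev u) x0).
  have := rev_path e x0 (rcons u y); rewrite last_rcons belast_rcons rev_cons => ->.
  by rewrite (@eq_path _ _ e) // => a b; apply: e_sym.
rewrite /= -cat_rcons cat_path last_rcons subrel_adj //=.
by rewrite !(sub_path (@subrel_adj _ e)).
Qed.

Lemma sweeps_path q : path (adj e) x0 (sweeps q).
Proof.
elim: q => [|q IH].
  rewrite /= /adj eqxx (sub_path (@subrel_adj _ e)) //.
  by move: e_path; rewrite rcons_path => /andP[].
by rewrite /sweeps iterS cat_path IH last_sweeps round_path.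
Qed.

Lemma sweeps_lower_bound (A : seq T -> nat) :
  (forall I J, A (I ++ J) <= A I + size J) -> (forall q, A (sweeps q) = k + 2 * q) ->
  forall n, k <= n -> exists I : seq T,
    [/\ size I = n, sorted (adj e) I & (k - 1) * n + k * A I <= k * FWF k I + 5 * k * k].
Proof.
move=> A_cat A_sweeps n kn.
set q := (n - k) %/ (2 * k); set r := (n - k) %% (2 * k).
have n_eq : n = k + q * (2 * k) + r by rewrite /q /r -addnA -divn_eq subnKC.
have r_lt : r < 2 * k by rewrite /r ltn_mod muln_gt0 k_gt0.
have size_round : size round = 2 * k.
  by rewrite size_cat size_sweep_bwd size_sweep_fwd addnn mul2n.
have size_r : size (take r round) = r by rewrite size_takel // size_round ltnW.
exists (sweeps q ++ take r round); split.
- by rewrite size_cat size_sweeps size_r.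
- apply: (path_sorted (x := x0)).
  by rewrite cat_path sweeps_path last_sweeps take_path ?round_path.
have le_FWF := FWF_cat (sweeps q) (take r round).
have le_A := A_cat (sweeps q) (take r round).
rewrite FWF_sweeps in le_FWF; rewrite A_sweeps size_r in le_A.
by rewrite n_eq; nia.
Qed.

End Sweeps.

Lemma FWF_nseq (x : T) n : FWF k (nseq n x) <= 1.
Proof.
have hits c f : x \in c -> foldl (fwf_step k) (c, f) (nseq n.-1 x) = (c, f).
  by elim: n.-1 => [|n' IH] //= xc; rewrite fwf_stepE /fwf_cache xc IH.
case: n hits => [|n] hits //; rewrite /FWF /= fwf_stepE /fwf_cache /=.
by rewrite if_same hits ?mem_head.
Qed.

Lemma LRU_gt0 x (I : seq T) : 0 < LRU k (x :: I).
Proof. exact: (@faults_foldl_miss _ _ _ _ lru_faults_hit lru_faults_miss ([::], 0)). Qed.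

Lemma FAR_gt0 x (I : seq T) : 0 < FAR e k (x :: I).
Proof.
exact: (@faults_foldl_miss _ _ _ _ far_faults_hit far_faults_miss ([::], finset.set0, 0)).
Qed.

Lemma constant_requests (A : seq T -> nat) x : (forall I, 0 < A (x :: I)) ->
  forall n, exists I : seq T, [/\ size I = n, sorted (adj e) I & FWF k I <= A I].
Proof.
move=> A_gt0 [|n]; first by exists [::].
exists (nseq n.+1 x); split; first by rewrite size_nseq.
  by elim: n => [|n IH] //=; rewrite /adj eqxx.
exact: leq_trans (FWF_nseq x n.+1) (A_gt0 _).
Qed.

End Caching.

Lemma ball_pathN N n (i z : 'I_N) :
  (z \in Defs.ball (pathN N) n i) = (i <= z + n) && (z <= i + n).
Proof.
elim: n z => [|n IH] z; first by rewrite /Defs.ball /= inE !addn0 -eqn_leq eq_sym.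
rewrite /Defs.ball iterS -/(Defs.ball (pathN N) n i) !inE IH.
apply/idP/idP.
  case/orP => [/andP[h1 h2]|/existsP[w /andP[]]]; first by apply/andP; split; lia.
  by rewrite IH /pathN => /andP[h1 h2] /orP[/eqP h|/eqP h]; apply/andP; split; lia.
move=> /andP[h1 h2]; case: (boolP ((i <= z + n) && (z <= i + n))) => // far_z.
apply/orP; right; apply/existsP; case: (ltnP (z + n) i) => hz.
  have zS : z.+1 < N by apply: leq_ltn_trans (ltn_ord i); lia.
  exists (Ordinal zS); rewrite IH /pathN /= eqxx orbT andbT; apply/andP; split; lia.
have z_gt0 : 0 < z by move: far_z; rewrite hz /=; lia.
have zP : z.-1 < N by apply: leq_ltn_trans (ltn_ord z); lia.
exists (Ordinal zP); rewrite IH /pathN /= prednK // eqxx andbT.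
by apply/andP; split; move: far_z; rewrite hz /=; lia.
Qed.

Lemma find_iota_threshold (P : pred nat) d m a :
  (forall n, P n = (d <= n)) -> a <= d < a + m -> find P (iota a m) = d - a.
Proof.
move=> P_ge; elim: m a => [|m IH] a; first by rewrite addn0; lia.
by move=> h /=; rewrite P_ge; case: (ltnP a d) => ad; [rewrite IH; lia | lia].
Qed.

Lemma gdist_pathN N (i j : 'I_N) : gdist (pathN N) i j = (i - j) + (j - i).
Proof.
rewrite /gdist card_ord (@find_iota_threshold _ ((i - j) + (j - i))) ?subn0 //.
  by move=> n; rewrite ball_pathN; apply/andP/idP => [[]|]; lia.
by have := ltn_ord i; have := ltn_ord j; lia.
Qed.

Lemma pathN_sym N : symmetric (pathN N).
Proof. by move=> a b; rewrite /pathN orbC. Qed.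

Section PathVertices.
Variables (n k : nat).
Hypothesis k_gt0 : 0 < k.
Hypothesis k_le_n : k <= n.

Definition vtx (i : nat) : 'I_n.+1 := inord i.
Local Notation inner := (map vtx (iota 1 k.-1)).

Lemma vtxK i : i <= n -> vtx i = i :> nat.
Proof. exact: inordK. Qed.

Lemma path_vtx : vtx 0 :: rcons inner (vtx k) = map vtx (iota 0 k.+1).
Proof.
rewrite /= -[in RHS](subnK k_gt0) iotaD addnC subnK // subn1.
by rewrite map_cat cats1.
Qed.

Lemma vtx_inj : {in [pred i | i <= n] &, injective vtx}.
Proof. by move=> i j /= ilt jlt eq_ij; rewrite -(vtxK ilt) -(vtxK jlt) eq_ij. Qed.

Lemma uniq_path_vtx : uniq (vtx 0 :: rcons inner (vtx k)).
Proof.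
rewrite path_vtx map_inj_in_uniq ?iota_uniq // => i j; rewrite !mem_iota => ilt jlt.
by apply: vtx_inj; rewrite inE; lia.
Qed.

Lemma pathN_vtx : path (pathN n.+1) (vtx 0) (rcons inner (vtx k)).
Proof.
have [->] : vtx 0 :: rcons inner (vtx k) = vtx 0 :: map vtx (iota 1 k).
  exact: path_vtx.
suff steps m a : a + m <= n -> path (pathN n.+1) (vtx a) (map vtx (iota a.+1 m)).
  by apply: steps; rewrite add0n.
elim: m a => [|m IH] a le_n //=.
by rewrite IH ?addSnnS // /pathN !vtxK ?eqxx //; lia.
Qed.

Lemma gdist_vtx i j : i <= n -> j <= n ->
  gdist (pathN n.+1) (vtx i) (vtx j) = (i - j) + (j - i).
Proof. by move=> ilt jlt; rewrite gdist_pathN !vtxK. Qed.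

Lemma FAR_sweeps_pathN q :
  FAR (pathN n.+1) k (sweeps (vtx 0) (vtx k) inner q) = k + 2 * q.
Proof.
apply: FAR_sweeps => //; first by rewrite size_map size_iota.
- exact: uniq_path_vtx.
- by move=> x /mapP[i]; rewrite mem_iota => ilt ->; rewrite !gdist_vtx //; lia.
- by move=> x /mapP[i]; rewrite mem_iota => ilt ->; rewrite !gdist_vtx //; lia.
Qed.

End PathVertices.

Local Open Scope ring_scope.

Section Convergence.
Local Open Scope classical_set_scope.

Lemma cvge_harmonic_shift (R : realType) (L c : R) :
  (fun n => (L + c * harmonic n)%:E) @ \oo --> L%:E.
Proof.
apply/fine_cvgP; split; first exact: nearW.
have := cvgD (cvg_cst L) (cvgMl_tmp (a := c) (@cvg_harmonic R)).
by rewrite mulr0 addr0; apply.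
Qed.

Lemma cvge_inv_nat_squeeze (R : realType) (g : nat -> \bar R) (L c : R) (n0 : nat) :
  0 <= c ->
  (forall n, (n0 <= n)%N -> (0 < n)%N ->
    ((L - c * n%:R^-1)%:E <= g n <= (L + c * n%:R^-1)%:E)%E) ->
  g @ \oo --> L%:E.
Proof.
move=> c_ge0 g_near.
apply: (@squeeze_cvge _ _ _ _ (fun n => (L + - (2 * c) * harmonic n)%:E) _
  (fun n => (L + 2 * c * harmonic n)%:E)); last 2 first.
- exact: cvge_harmonic_shift.
- exact: cvge_harmonic_shift.
near=> n.
have n0_lt : (n0 < n)%N by near: n; exact: nbhs_infty_gt.
have n_gt0 : (0 < n)%N by apply: leq_ltn_trans n0_lt.
have /andP[lo hi] := g_near n (ltnW n0_lt) n_gt0.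
(* [1/n <= 2/(n+1)] for [n >= 1] *)
have inv_le : c * n%:R^-1 <= 2 * c * harmonic n.
  rewrite /harmonic /= -mulrA mulrCA ler_wpM2l //.
  rewrite -[_^-1]mul1r ler_pdivrMr ?ltr0n // mulrAC ler_pdivlMr ?ltr0n // mul1r.
  by rewrite -natrM ler_nat; lia.
by rewrite (le_trans _ lo) ?(le_trans hi) // lee_fin ?lerD2l // mulNr lerN2.
Unshelve. all: end_near.
Qed.

End Convergence.

Lemma gap_ratio_le (R : realFieldType) (K F a n : R) : 0 < K -> 0 < n ->
  K * F <= K * a + (K - 1) * n + K -> (F - a) * n^-1 <= (1 - K^-1) + n^-1.
Proof.
move=> K_gt0 n_gt0 h.
have KV : K * K^-1 = 1 by rewrite mulfV // gt_eqF.
have nV : n * n^-1 = 1 by rewrite mulfV // gt_eqF.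
have := invr_gt0 K; have := invr_gt0 n; rewrite K_gt0 n_gt0 => nV_gt0 KV_gt0.
nra.
Qed.

Lemma gap_ratio_ge (R : realFieldType) (K F a n c : R) : 0 < K -> 0 < n ->
  (K - 1) * n + K * a <= K * F + c * K -> (1 - K^-1) - c * n^-1 <= (F - a) * n^-1.
Proof.
move=> K_gt0 n_gt0 h.
have KV : K * K^-1 = 1 by rewrite mulfV // gt_eqF.
have nV : n * n^-1 = 1 by rewrite mulfV // gt_eqF.
have := invr_gt0 K; have := invr_gt0 n; rewrite K_gt0 n_gt0 => nV_gt0 KV_gt0.
nra.
Qed.

Section RelativeInterval.
Variables (R : realType) (T : finType) (e : rel T) (k : nat) (A : seq T -> nat).
Hypothesis k_gt0 : (0 < k)%N.
Hypothesis A_le_FWF : forall I, (A I <= FWF k I)%N.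
Hypothesis FWF_gap_le : forall I, (k * FWF k I <= k * A I + (k - 1) * size I + k)%N.
Hypothesis FWF_le_A_witness :
  forall n, exists I : seq T, [/\ size I = n, sorted (adj e) I & (FWF k I <= A I)%N].
Hypothesis FWF_gap_witness : forall n, (k <= n)%N -> exists I : seq T,
  [/\ size I = n, sorted (adj e) I & ((k - 1) * n + k * A I <= k * FWF k I + 5 * k * k)%N].

Local Notation MinAB := (MinAB R e (@FWF T k) A).
Local Notation MaxAB := (MaxAB R e (@FWF T k) A).

Lemma MinAB_FWF_eq0 n : MinAB n = 0%E.
Proof.
apply/eqP; rewrite eq_le; apply/andP; split.
  have [I [sI rI FWF_le]] := FWF_le_A_witness n; have tI : size I == n by rewrite sI.
  apply: le_trans (bigmin_le_cond _ (j := Tuple tI) _ _) _ => //.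
  by rewrite lee_fin subr_le0 ler_nat.
by apply: le_bigmin => // t _; rewrite lee_fin subr_ge0 ler_nat.
Qed.

Lemma MaxAB_FWF_le n : (0 < n)%N ->
  (MaxAB n <= (((1 - k%:R^-1) + n%:R^-1) * n%:R)%:E)%E.
Proof.
move=> n_gt0; apply: bigmax_le => [|t _]; first exact: leNye.
rewrite lee_fin -ler_pdivrMr ?ltr0n //; apply: gap_ratio_le; rewrite ?ltr0n //.
by have := FWF_gap_le t; rewrite -(ler_nat R) !natrD !natrM natrB // size_tuple.
Qed.

Lemma MaxAB_FWF_ge n : (k <= n)%N -> (0 < n)%N ->
  ((((1 - k%:R^-1) - 5 * k%:R * n%:R^-1) * n%:R)%:E <= MaxAB n)%E.
Proof.
move=> kn n_gt0; have [I [sI rI gap]] := FWF_gap_witness kn.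
have tI : size I == n by rewrite sI.
apply: le_trans (le_bigmax_cond _ (j := Tuple tI) _ _) => //=.
rewrite lee_fin -ler_pdivlMr ?ltr0n //; apply: gap_ratio_ge; rewrite ?ltr0n //.
by move: gap; rewrite -(ler_nat R) !natrD !natrM natrB.
Qed.

Lemma rel_interval_FWF : rel_interval R e (@FWF T k) A = (0%E, (1 - k%:R^-1)%:E).
Proof.
rewrite /rel_interval; congr pair.
  under eq_fun => n do rewrite MinAB_FWF_eq0 mul0e.
  exact: (cvg_limn_einf_sup (cvg_cst _)).1.
apply: (cvg_limn_einf_sup _).2.
apply: (@cvge_inv_nat_squeeze _ _ _ (5 * k%:R) k) => // n kn n_gt0.
have k_ge1 : (1 : R) <= k%:R by rewrite ler1n.
have nV_ge0 : (0 : R) <= n%:R^-1 by rewrite invr_ge0.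
apply/andP; split.
  apply: le_trans (lee_wpmul2r _ (MaxAB_FWF_ge kn n_gt0)); last by rewrite lee_fin.
  by rewrite -EFinM mulfK // pnatr_eq0 -lt0n.
apply: le_trans (lee_wpmul2r _ (MaxAB_FWF_le n_gt0)) _; first by rewrite lee_fin.
rewrite -EFinM mulfK ?pnatr_eq0 -?lt0n // lee_fin lerD2l -[X in X <= _]mul1r.
by rewrite ler_wpM2r //; lra.
Qed.

End RelativeInterval.

Lemma rel_interval_FWF_LRU (R : realType) (T : finType) (e : rel T) (k : nat) :
  (0 < k)%N -> symmetric e ->
  (exists s : seq T, [/\ size s = k.+1, uniq s & sorted e s]) ->
  rel_interval R e (@FWF T k) (@LRU T k) = (0%E, (1 - k%:R^-1)%:E).
Proof.
move=> k_gt0 e_sym [[|x0 s] [size_s uniq_s path_s]] //.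
case/lastP: s size_s uniq_s path_s => [[k0]|u y]; first by rewrite -k0 in k_gt0.
rewrite /= size_rcons => -[size_u] uniq_s path_s.
have {}size_u : size u = k.-1 by rewrite -size_u.
apply: rel_interval_FWF => // [I|I|n|n].
- by case: (LRU_bounds k_gt0 I).
- by case: (LRU_bounds k_gt0 I).
- exact: constant_requests (LRU_gt0 k x0) n.
- exact: sweeps_lower_bound e_sym path_s _ (LRU_cat k) (LRU_sweeps k_gt0 size_u uniq_s) n.
Qed.

Lemma rel_interval_FWF_FAR_pathN (R : realType) (k n : nat) : (0 < k)%N -> (k <= n)%N ->
  rel_interval R (pathN n.+1) (@FWF _ k) (@FAR _ (pathN n.+1) k) = (0%E, (1 - k%:R^-1)%:E).
Proof.
move=> k_gt0 k_le_n.
have size_u : size (map (vtx n) (iota 1 k.-1)) = k.-1 by rewrite size_map size_iota.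
apply: rel_interval_FWF => // [I|I|m|m].
- by case: (FAR_bounds (pathN n.+1) k_gt0 I).
- by case: (FAR_bounds (pathN n.+1) k_gt0 I).
- exact: constant_requests (FAR_gt0 k (pathN n.+1) (vtx n 0)) m.
- apply: (sweeps_lower_bound k_gt0 size_u (uniq_path_vtx k_gt0 k_le_n) (@pathN_sym _)
    (pathN_vtx k_gt0 k_le_n) (FAR_cat k (pathN n.+1))).
  exact: FAR_sweeps_pathN.
Qed.

Theorem theorem2 (R : realType) (k N : nat) :
  (1 <= k)%N -> (k.+1 <= N)%N ->
  [/\ rel_interval R (pathN N) (@FWF _ k) (@LRU _ k) = (0%E, (1 - k%:R^-1)%:E),
      rel_interval R (pathN N) (@FWF _ k) (@FAR _ (pathN N) k) = (0%E, (1 - k%:R^-1)%:E)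
    & forall (T : finType) (e : rel T),
        symmetric e -> irreflexive e ->
        (exists s : seq T, [/\ size s = k.+1, uniq s & path.sorted e s]) ->
        rel_interval R e (@FWF T k) (@LRU T k) = (0%E, (1 - k%:R^-1)%:E)].
Proof.
move=> k_gt0; case: N => [|n] // k_le_n; split.
- apply: rel_interval_FWF_LRU => //; first exact: pathN_sym.
  exists (vtx n 0 :: rcons (map (vtx n) (iota 1 k.-1)) (vtx n k)); split.
  + by rewrite /= size_rcons size_map size_iota prednK.
  + exact: uniq_path_vtx.
  + exact: pathN_vtx.
- exact: rel_interval_FWF_FAR_pathN.
- by move=> T e e_sym _; apply: rel_interval_FWF_LRU.
Qed.
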